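(* Let $\mathcal{C}$ be a class of $\Sigma$-algebras, let $X \subseteq \dot\Sigma$ be a finite set, and let $<$ be a well-founded binary relation on $X^*$ such that (i) $<$ is compatible with concatenation ($w < w'$ implies $u w v < u w' v$ for all $u,v\in X^*$), and (ii) $<$ has no infinite antichains. Then the following are equivalent: (1) there is a finite set $\{(u_i, w_i) \mid i \in I\}$ of pairs of words in $X^*$ with $u_i < w_i$ and $u_i\ \dot\sim_{\mathcal{C}}\ w_i$ for all $i$, such that the language $X^*\big(\bigcup_{i\in I} w_i\big)X^*$ over the alphabet $X$ is cofinite (its complement in $X^*$ is finite); (2) $X^*/{\dot\sim_{\mathcal{C}}}$ is finite.
   Context: $\Sigma$ is a finite algebraic signature and $V$ a non-empty finite set of variables; $\Sigma$-terms over $V$, and $\Sigma$-algebras have non-empty finite universes; $t \sim_{\mathcal{C}} s$ iff $t,s$ evaluate equally under all valuations in all algebras in $\mathcal{C}$. $\mathrm{vo}(t)$ is the number of variable occurrences in $t$. $\dot\Sigma$ is the set of characters $f(t_1,\dots,t_{i-1},\_,t_{i+1},\dots,t_n)$ where $f\in\Sigma$ is $n$-ary, $i\in\{1,\dots,n\}$, and each $t_j$ ($j\ne i$) has $\mathrm{vo}(t_j)=0$. For a word $w\in\dot\Sigma^*$, $w[t]$ is defined by $\varepsilon[t]=t$ and $(f(t_1,\dots,\_,\dots,t_n)\,w')[t] = f(t_1,\dots,t_{i-1},w'[t],t_{i+1},\dots,t_n)$. $w\ \dot\sim_{\mathcal{C}}\ w'$ iff $w[a]\sim_{\mathcal{C}}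 w'[a]$ for any variable $a\in V$. *)

From mathcomp Require Import all_boot.
Set Implicit Arguments. Unset Strict Implicit. Unset Printing Implicit Defensive.

Inductive term (F : Type) (ar : F -> nat) (V : Type) : Type :=
  | Var of V
  | App (f : F) of ('I_(ar f) -> term ar V).
Arguments Var {F ar V} _.
Arguments App {F ar V} f _.

Fixpoint vo F (ar : F -> nat) V (t : term ar V) : nat :=
  match t with
  | Var _ => 1
  | App f ts => \sum_(j < ar f) vo (ts j)
  end.

(* Sigma-algebras with non-empty finite universe *)
Record algebra (F : Type) (ar : F -> nat) : Type := Algebra {
  carrier : finType;
  some_elt : carrier;
  ops : forall f : F, ('I_(ar f) -> carrier) -> carrier }.

Fixpoint eval F (ar : F -> nat) V (A : algebra ar) (val : V -> carrier A)
    (t : term ar V) : carrier A :=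
  match t with
  | Var v => val v
  | App f ts => @ops F ar A f (fun j => eval val (ts j))
  end.

Definition sim F (ar : F -> nat) V (C : algebra ar -> Prop) (t s : term ar V) :=
  forall A : algebra ar, C A -> forall val : V -> carrier A, eval val t = eval val s.

(* characters f(t_1,..,t_{i-1},_,t_{i+1},..,t_n) with ground t_j *)
Record char F (ar : F -> nat) V : Type := Char {
  cf : F;
  ci : 'I_(ar cf);
  cargs : 'I_(ar cf) -> term ar V;
  cground : forall j, j != ci -> vo (cargs j) = 0 }.

Definition plug F (ar : F -> nat) V (c : char ar V) (t : term ar V) : term ar V :=
  App (cf c) (fun j => if j == @ci F ar V c then t else @cargs F ar V c j).

(* w[t] for a word w over an alphabet Al interpreted by chr : Al -> char *)
Definition wapp F (ar : F -> nat) V (Al : Type) (chr : Al -> char ar V)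
    (w : seq Al) (t : term ar V) : term ar V :=
  foldr (fun a acc => plug (chr a) acc) t w.

Definition wsim F (ar : F -> nat) V (C : algebra ar -> Prop) (Al : Type)
    (chr : Al -> char ar V) (w w' : seq Al) :=
  forall a : V, sim C (wapp chr w (Var a)) (wapp chr w' (Var a)).

From mathcomp Require Import all_boot.
From Stdlib Require Import Classical ClassicalEpsilon FunctionalExtensionality.

Set Implicit Arguments. Unset Strict Implicit. Unset Printing Implicit Defensive.

(* If X^* / ~ is finite, then by the absence of infinite antichains each
   class contains only finitely many words that have no smaller equivalent
   word, so there are finitely many such irreducible words. The minimal
   reducible words (empty, or an irreducible word extended by one letter) are
   then finitely many too; their reductions give the pairs (u_i, w_i), and a
   word avoiding every w_i as a factor is irreducible, hence in a finite set.
   Conversely, given the pairs, well-founded rewriting w_i -> u_i inside any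
   context sends every word to an equivalent word avoiding all w_i, and those
   form a finite set. *)

Section Words.
Variables (F : Type) (ar : F -> nat) (V : Type).
Variables (C : algebra ar -> Prop) (Al : Type) (chr : Al -> char ar V).

Lemma eval_ground (A : algebra ar) (t : term ar V) (val val' : V -> carrier A) :
  vo t = 0 -> eval val t = eval val' t.
Proof.
elim: t => [//|f ts IH] /= vo0.
congr (ops _); apply: functional_extensionality => j; apply: IH.
by move: vo0; rewrite (bigD1 j) //= => /eqP; rewrite addn_eq0 => /andP[/eqP].
Qed.

Lemma sim_sym (t s : term ar V) : sim C t s -> sim C s t.
Proof. by move=> ts A CA val; rewrite ts. Qed.

Lemma sim_trans (t s r : term ar V) : sim C t s -> sim C s r -> sim C t r.
Proof. by move=> ts sr A CA val; rewrite ts ?sr. Qed.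

Lemma wapp_cat u v (t : term ar V) : wapp chr (u ++ v) t = wapp chr u (wapp chr v t).
Proof. exact: foldr_cat. Qed.

Lemma sim_wapp u (s s' : term ar V) :
  sim C s s' -> sim C (wapp chr u s) (wapp chr u s').
Proof.
move=> ss'; elim: u => [//|c u IH] /= A CA val.
congr (ops _); apply: functional_extensionality => j.
by case: (j == ci (chr c)) => //; apply: IH.
Qed.

(* Valid because the side arguments of the characters are ground. *)
Lemma eval_wapp (A : algebra ar) (val : V -> carrier A) w s a :
  eval val (wapp chr w s) = eval (fun _ => eval val s) (wapp chr w (Var a)).
Proof.
elim: w => [//|c w IH] /=.
congr (ops _); apply: functional_extensionality => j.
case: eqP => [_|/eqP ne]; first exact: IH.
exact: eval_ground (cground ne).
Qed.

Lemma wsim_refl w : wsim C chr w w.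
Proof. by []. Qed.

Lemma wsim_sym w w' : wsim C chr w w' -> wsim C chr w' w.
Proof. by move=> ww' a; apply: sim_sym. Qed.

Lemma wsim_trans w w' w'' :
  wsim C chr w w' -> wsim C chr w' w'' -> wsim C chr w w''.
Proof. by move=> ww' w'w'' a; apply: sim_trans (ww' a) (w'w'' a). Qed.

Lemma wsim_catl u w w' : wsim C chr w w' -> wsim C chr (u ++ w) (u ++ w').
Proof. by move=> ww' a; rewrite !wapp_cat; apply: sim_wapp. Qed.

Lemma wsim_catr v w w' : wsim C chr w w' -> wsim C chr (w ++ v) (w' ++ v).
Proof.
move=> ww' a A CA val.
by rewrite !wapp_cat (eval_wapp val w _ a) (eval_wapp val w' _ a) ww'.
Qed.

Lemma wsim_congr u v w w' :
  wsim C chr w w' -> wsim C chr (u ++ w ++ v) (u ++ w' ++ v).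
Proof. by move=> /(wsim_catr v) /(wsim_catl u). Qed.

End Words.

Lemma finite_or_injective (T : eqType) (Q : T -> Prop) :
  (exists L : seq T, forall x, Q x -> x \in L) \/
  exists2 f : nat -> T, injective f & forall n, Q (f n).
Proof.
have [|nofin] := classic (exists L : seq T, forall x, Q x -> x \in L); first by left.
right; have [g gP] : exists g : seq T -> T, forall L, Q (g L) /\ g L \notin L.
  apply: (@choice _ _ (fun L x => Q x /\ x \notin L)) => L.
  apply: NNPP => noxL; apply: nofin; exists L => x Qx.
  by apply: NNPP => xL; apply: noxL; exists x; split=> //; apply/negP.
pose fix l n := if n is m.+1 then g (l m) :: l m else [::].
pose f n := g (l n).
have mem_l i j : i < j -> f i \in l j.
  elim: j => // j IH; rewrite ltnS leq_eqVlt => /orP[/eqP->|/IH fi] /=;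
    by rewrite in_cons ?eqxx ?fi ?orbT.
exists f => [i j fij|n]; last exact: (gP _).1.
have [ij|ji|//] := ltngtP i j.
- by have := mem_l _ _ ij; rewrite fij (negbTE (gP _).2).
- by have := mem_l _ _ ji; rewrite -fij (negbTE (gP _).2).
Qed.

Section Reductions.
Variables (Al : finType) (eqv lt : seq Al -> seq Al -> Prop).
Hypotheses (eqv_refl : forall w, eqv w w)
  (eqv_sym : forall w w', eqv w w' -> eqv w' w)
  (eqv_trans : forall w w' w'', eqv w w' -> eqv w' w'' -> eqv w w'')
  (eqv_congr : forall u v w w', eqv w w' -> eqv (u ++ w ++ v) (u ++ w' ++ v)).
Hypotheses (lt_wf : well_founded lt)
  (lt_compat : forall u v w w', lt w w' -> lt (u ++ w ++ v) (u ++ w' ++ v))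
  (lt_noanti : forall f : nat -> seq Al, injective f ->
      exists i j, i <> j /\ lt (f i) (f j)).

Definition reducible w := exists2 u, lt u w & eqv u w.

Definition reduction_pairs (P : seq (seq Al * seq Al)) :=
  forall p, p \in P -> lt p.1 p.2 /\ eqv p.1 p.2.

Definition avoids (P : seq (seq Al * seq Al)) x :=
  forall p, p \in P -> ~~ infix p.2 x.

Lemma reduce_to_avoiding P :
  reduction_pairs P -> forall x, exists2 y, avoids P y & eqv x y.
Proof.
move=> redP x; elim/(well_founded_induction lt_wf): x => x IH.
have [/hasP[p Pp /infixP[s [s' xE]]]|noP] := boolP (has (fun p => infix p.2 x) P).
  subst x; have [lt_p eqv_p] := redP p Pp.
  have [y avy eqvy] := IH _ (lt_compat s s' lt_p).
  by exists y; last exact: eqv_trans (eqv_sym (eqv_congr s s' eqv_p)) eqvy.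
exists x => // p Pp; move: noP; apply: contraNN => px; by apply/hasP; exists p.
Qed.

Lemma irreducible_class_finite r :
  exists L : seq (seq Al), forall w, ~ reducible w -> eqv w r -> w \in L.
Proof.
have [[L Lcover]|[f finj fP]] :=
  finite_or_injective (fun w => ~ reducible w /\ eqv w r).
  by exists L => w wirr wr; apply: Lcover.
have [i [j [_ lt_ij]]] := lt_noanti finj.
case: (fP j) => jirr jr; case: jirr; exists (f i) => //.
exact: eqv_trans (fP i).2 (eqv_sym jr).
Qed.

Lemma irreducible_finite (reps : seq (seq Al)) :
  (forall w, exists2 r, r \in reps & eqv w r) ->
  exists L : seq (seq Al), forall w, ~ reducible w -> w \in L.
Proof.
move=> reps_cover.
suff [L Lcover] : exists L : seq (seq Al),
    forall w, ~ reducible w -> (exists2 r, r \in reps & eqv w r) -> w \in L.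
  by exists L => w wirr; apply: Lcover wirr (reps_cover w).
elim: reps {reps_cover} => [|r reps [L IH]]; first by exists [::] => w _ [].
have [Lr Lr_cover] := irreducible_class_finite r.
exists (Lr ++ L) => w wirr [r']; rewrite in_cons mem_cat => /orP[/eqP->|r'reps] wr'.
  by rewrite Lr_cover.
by rewrite IH ?orbT //; exists r'.
Qed.

Lemma reductions_of_reducible (cand : seq (seq Al)) :
  exists2 P, reduction_pairs P &
  forall c, c \in cand -> reducible c -> exists2 p, p \in P & p.2 = c.
Proof.
elim: cand => [|c cand [P redP Pcover]]; first by exists [::].
have [[u lt_uc eqv_uc]|cirr] := classic (reducible c).
  exists ((u, c) :: P) => [p|c']; first by rewrite in_cons => /orP[/eqP->|/redP].
  rewrite in_cons => /orP[/eqP-> _|c'cand c'red].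
    by exists (u, c); rewrite ?mem_head.
  by have [p Pp <-] := Pcover _ c'cand c'red; exists p; rewrite // in_cons Pp orbT.
exists P => // c'; rewrite in_cons => /orP[/eqP-> //|]; exact: Pcover.
Qed.

(* The second premise says that c is minimally reducible: its maximal proper
   prefix, if any, is irreducible. *)
Lemma avoiding_irreducible P :
  (forall c, reducible c -> (forall w a, c = rcons w a -> ~ reducible w) ->
     exists2 p, p \in P & p.2 = c) ->
  forall x, avoids P x -> ~ reducible x.
Proof.
move=> Pcover; elim/last_ind => [|x a IH] avx xred.
  have [|p Pp p2nil] := Pcover _ xred; first by move=> [|? ?] ?.
  by move: (avx p Pp); rewrite p2nil infix0s.
have xirr : ~ reducible x.
  apply: IH => p Pp; move: (avx p Pp); apply: contraNN => px.
  exact: infix_trans px (infix_rcons x a).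
have [|p Pp p2xa] := Pcover _ xred; first by move=> w b /rcons_inj[<- _].
by move: (avx p Pp); rewrite p2xa infix_refl.
Qed.

Theorem cofinite_reductions_iff_finite_index :
  (exists2 P, reduction_pairs P &
     exists E : seq (seq Al), forall x, avoids P x -> x \in E)
  <-> exists reps : seq (seq Al), forall w, exists2 r, r \in reps & eqv w r.
Proof.
split=> [[P redP [E Ecover]]|[reps reps_cover]].
  exists E => w; have [y avy wy] := reduce_to_avoiding redP w.
  by exists y => //; apply: Ecover.
have [Irr Irr_cover] := irreducible_finite reps_cover.
have [P redP Pcover] :=
  reductions_of_reducible ([::] :: [seq rcons w a | w <- Irr, a <- enum Al]).
exists P => //; exists Irr => x avx; apply: (Irr_cover x).
apply: avoiding_irreducible avx => c cred cmin; apply: Pcover cred.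
case/lastP: c cmin => [_|w a wirr]; first exact: mem_head.
rewrite in_cons; apply/orP; right; apply/allpairsP; exists (w, a).
by rewrite mem_enum (Irr_cover w) //; exact: wirr.
Qed.

End Reductions.

Theorem lemma2p15 (F : finType) (ar : F -> nat) (V : finType) (v0 : V)
  (C : algebra ar -> Prop)
  (Al : finType) (chr : Al -> char ar V) (chr_inj : injective chr)
  (lt : seq Al -> seq Al -> Prop)
  (lt_wf : well_founded lt)
  (lt_compat : forall u v w w', lt w w' -> lt (u ++ w ++ v) (u ++ w' ++ v))
  (lt_noanti : forall f : nat -> seq Al, injective f ->
      exists i j, i <> j /\ lt (f i) (f j)) :
  (exists P : seq (seq Al * seq Al),
      (forall p, p \in P -> lt p.1 p.2 /\ wsim C chr p.1 p.2) /\
      exists E : seq (seq Al),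
        forall x : seq Al, (forall p, p \in P -> ~~ infix p.2 x) -> x \in E)
  <->
  (exists reps : seq (seq Al), forall w : seq Al, exists2 r, r \in reps & wsim C chr w r).
Proof.
rewrite -(cofinite_reductions_iff_finite_index (@wsim_refl _ _ _ C _ chr)
  (@wsim_sym _ _ _ C _ chr) (@wsim_trans _ _ _ C _ chr) (@wsim_congr _ _ _ C _ chr)
  lt_wf lt_compat lt_noanti).
by split=> [[P [redP avE]]|[P redP avE]]; exists P.
Qed.
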